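(* Let $\dot x$ be a hereditarily symmetric name supported by a countable $\rho$-closed set $A\subseteq\omega_1$, let $m<\omega$, and suppose $p\in\mathbb P_1$ decides whether $\check m\in\dot x$. Then the restriction of $p$ to the coordinates $(\xi,i,n)$ with $\xi\in A$ decides the same truth value.
   Context: $\rho:\omega_1\setminus\{0\}\to\omega_1$ is the generic regressive map added by finite partial regressive functions; $\operatorname{Succ}_\rho(\xi)=\{\eta:\rho(\eta)=\xi\}$; a set is $\rho$-closed if closed under $\rho$, and $\operatorname{cl}_\rho(A)$ is the least $\rho$-closed superset. $\mathbb P_1=\operatorname{Fn}(\omega_1\times\omega\times\omega,2,{<}\omega)$, finite partial functions ordered by extension. For $\xi<\omega_1,i<\omega$, $s\subseteq\omega$ finite or cofinite, $\tau^{\mathrm{1cas}}_{\xi,i,s}$ flips the value of a condition at each coordinate $(\zeta,i,n)$ with $n\in s$ and $\zeta\in\{\xi\}\cup\operatorname{Succ}_\rho(\xi)$; $\mathscr G^{\mathrm{1cas}}_\rho$ is the group they generate; $\operatorname{Fix}^{\mathrm{1cas}}_\rho(A)$ is the subgroup acting trivially on coordinates $(\zeta,j,n)$ with $\zeta\in\operatorname{cl}_\rho(A)$; $\mathscr F^{\mathrm{1cas}}_\rho$ is the filter of subgroups generated by these for countable $A$; hereditarily symmetric names are with respect to $(\mathbb P_1,\mathscr G^{\mathrm{1cas}}_\rho,\mathscr F^{\mathrm{1cas}}_\rho)$; a name is supported by $A$ if it is fixed by every element of $\operatorname{Fix}^{\mathrm{1cas}}_\rho(A)$. *)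

From Stdlib Require Import List Arith ClassicalEpsilon.
Import ListNotations.
Set Implicit Arguments.

Definition countable {W : Type} (A : W -> Prop) : Prop :=
  exists f : nat -> W, forall w, A w -> exists n, f n = w.

(* (W, lt) is (order-isomorphic to) omega_1: a strict well-order all of whose
   proper initial segments are countable, while W itself is uncountable. *)
Definition is_omega1 {W : Type} (lt : W -> W -> Prop) : Prop :=
  (forall x, ~ lt x x) /\
  (forall x y w, lt x y -> lt y w -> lt x w) /\
  (forall x y, lt x y \/ x = y \/ lt y x) /\
  well_founded lt /\
  (forall w, countable (fun v => lt v w)) /\
  ~ countable (fun _ : W => True).

(* rho : omega_1 \ {0} -> omega_1 regressive; z is 0 (value rho z irrelevant) *)
Definition regressive {W : Type} (lt : W -> W -> Prop) (z : W) (rho : W -> W) :=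
  forall eta, eta <> z -> lt (rho eta) eta.

Definition rho_closed {W : Type} (z : W) (rho : W -> W) (B : W -> Prop) :=
  forall eta, B eta -> eta <> z -> B (rho eta).

Definition in_cl {W : Type} (z : W) (rho : W -> W) (A : W -> Prop) (x : W) :=
  forall B : W -> Prop, (forall w, A w -> B w) -> rho_closed z rho B -> B x.

Definition coord (W : Type) := (W * nat * nat)%type.

Definition finsupp {W : Type} (p : coord W -> option bool) : Prop :=
  exists l : list (coord W), forall c, p c <> None -> In c l.

Definition cond (W : Type) := { p : coord W -> option bool | finsupp p }.

Definition cle {W : Type} (q p : cond W) : Prop :=
  forall c b, proj1_sig p c = Some b -> proj1_sig q c = Some b.

Lemma finsupp_none {W : Type} : finsupp (fun _ : coord W => None).
Proof. exists nil; intros c H; now elim H. Qed.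

Definition cone (W : Type) : cond W := exist _ (fun _ => None) finsupp_none.

Definition dense_below {W : Type} (p : cond W) (D : cond W -> Prop) : Prop :=
  forall r, cle r p -> exists q, cle q r /\ D q.

Inductive name (C : Type) : Type :=
  Nm : forall (Ix : Type), (Ix -> name C) -> (Ix -> C) -> name C.
Arguments Nm {C} Ix _ _.

Fixpoint name_eq {C : Type} (x y : name C) : Prop :=
  match x, y with
  | Nm Ix f c, Nm J g d =>
      (forall i, exists j, name_eq (f i) (g j) /\ c i = d j) /\
      (forall j, exists i, name_eq (f i) (g j) /\ c i = d j)
  end.

(* check names of natural numbers (von Neumann): 0 = {}, k+1 = k u {k} *)
Fixpoint checkn {C : Type} (one : C) (n : nat) : name C :=
  match n with
  | O => Nm False (fun e => match e with end) (fun e => match e with end)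
  | S k =>
      match checkn one k with
      | Nm Ix f c =>
          Nm (option Ix)
             (fun o => match o with None => checkn one k | Some i => f i end)
             (fun _ => one)
      end
  end.

(* Kunen's forcing relation for atomic formulas *)
Fixpoint forces_eq {W : Type} (x y : name (cond W)) (p : cond W) : Prop :=
  match x, y with
  | Nm Ix f c, Nm J g d =>
      (forall i, dense_below p (fun q => cle q p /\
          (cle q (c i) -> exists j, cle q (d j) /\ forces_eq (f i) (g j) q))) /\
      (forall j, dense_below p (fun q => cle q p /\
          (cle q (d j) -> exists i, cle q (c i) /\ forces_eq (f i) (g j) q)))
  end.

Definition forces_in {W : Type} (x y : name (cond W)) (p : cond W) : Prop :=
  match y with
  | Nm J g d => dense_below p (fun q => cle q p /\
                   exists j, cle q (d j) /\ forces_eq (g j) x q)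
  end.

Definition forces_nin {W : Type} (x y : name (cond W)) (p : cond W) : Prop :=
  forall q, cle q p -> ~ forces_in x y q.

Definition fin_or_cofin (s : nat -> bool) : Prop :=
  (exists N, forall n, N <= n -> s n = false) \/
  (exists N, forall n, N <= n -> s n = true).

Definition gen (W : Type) := (W * nat * (nat -> bool))%type.

Definition dec (P : Prop) : bool :=
  if excluded_middle_informative P then true else false.

(* does tau_{xi,i,s} flip coordinate (zeta,j,n)?  zeta in {xi} u Succ_rho(xi) *)
Definition gen_hits {W : Type} (z : W) (rho : W -> W) (g : gen W) (c : coord W)
  : bool :=
  match g, c with
  | (xi, i, s), (zeta, j, n) =>
      Nat.eqb i j && s n && dec (zeta = xi \/ (zeta <> z /\ rho zeta = xi))
  end.

(* elements of the generated group: finite words of generators *)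
Definition valid_word {W : Type} (pi : list (gen W)) : Prop :=
  Forall (fun g => fin_or_cofin (snd g)) pi.

Definition flip_at {W : Type} (z : W) (rho : W -> W) (pi : list (gen W))
  (c : coord W) : bool :=
  fold_right xorb false (map (fun g => gen_hits z rho g c) pi).

Definition act_fun {W : Type} (z : W) (rho : W -> W) (pi : list (gen W))
  (p : cond W) : coord W -> option bool :=
  fun c => option_map (xorb (flip_at z rho pi c)) (proj1_sig p c).

Lemma act_finsupp {W : Type} (z : W) rho pi (p : cond W) :
  finsupp (act_fun z rho pi p).
Proof.
  destruct p as [p [l Hl]]; exists l; intros c Hc; apply Hl.
  unfold act_fun in Hc; simpl in Hc; destruct (p c); [discriminate|easy].
Qed.

Definition act_cond {W : Type} (z : W) rho pi (p : cond W) : cond W :=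
  exist _ (act_fun z rho pi p) (act_finsupp z rho pi p).

Fixpoint act_name {W : Type} (z : W) rho pi (x : name (cond W)) : name (cond W) :=
  match x with
  | Nm Ix f c => Nm Ix (fun i => act_name z rho pi (f i)) (fun i => act_cond z rho pi (c i))
  end.

Definition inFix {W : Type} (z : W) rho (A : W -> Prop) (pi : list (gen W)) : Prop :=
  forall zeta j n, in_cl z rho A zeta -> flip_at z rho pi (zeta, j, n) = false.

Definition supported {W : Type} (z : W) rho (A : W -> Prop) (x : name (cond W)) :=
  forall pi, valid_word pi -> inFix z rho A pi -> name_eq (act_name z rho pi x) x.

(* symmetric: sym(x) belongs to the filter generated by the Fix(B), B countable *)
Definition symmetric {W : Type} (z : W) rho (x : name (cond W)) : Prop :=
  exists B : W -> Prop, countable B /\ supported z rho B x.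

Fixpoint hsym {W : Type} (z : W) rho (x : name (cond W)) : Prop :=
  symmetric z rho x /\
  match x with Nm Ix f _ => forall i, hsym z rho (f i) end.

Definition restr_fun {W : Type} (A : W -> Prop) (p : cond W) : coord W -> option bool :=
  fun c => match c with (xi, _, _) => if dec (A xi) then proj1_sig p c else None end.

Lemma restr_finsupp {W : Type} (A : W -> Prop) (p : cond W) : finsupp (restr_fun A p).
Proof.
  destruct p as [p [l Hl]]; exists l; intros [[xi i] n] Hc; apply Hl.
  unfold restr_fun in Hc; simpl in Hc; destruct (dec (A xi)); [easy|now elim Hc].
Qed.

Definition restrict {W : Type} (A : W -> Prop) (p : cond W) : cond W :=
  exist _ (restr_fun A p) (restr_finsupp A p).

From Stdlib Require Import List Arith Lia Bool Wf_nat ClassicalEpsilon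
  FunctionalExtensionality ProofIrrelevance.
Import ListNotations.

(** Every automorphism in Fix(A) fixes x and the check names, so it preserves
    the forcing of [m ∈ x] and of [m ∉ x].  Given r extending the restriction
    p|A, one finds such an automorphism moving r to a condition compatible
    with p: the flips needed on the finite support of r lie outside A, and
    they are produced by generators tau_{xi,i,{n}}, correcting the coordinate
    with the largest xi last, since a generator at xi only disturbs (xi,i,n)
    and coordinates whose first entry is a rho-successor of xi, hence above
    xi.  So every extension of p|A is compatible with a Fix(A)-image of an
    extension of p, and p|A forces whatever p forces. *)

Lemma cond_ext {W : Type} (p q : cond W) :
  (forall c, proj1_sig p c = proj1_sig q c) -> p = q.
Proof.
  destruct p as [p Hp], q as [q Hq]; simpl; intro H.
  assert (p = q) by (apply functional_extensionality; auto); subst.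
  f_equal; apply proof_irrelevance.
Qed.

Lemma cle_refl {W : Type} (p : cond W) : cle p p.
Proof. unfold cle; auto. Qed.

Lemma cle_trans {W : Type} (p q r : cond W) : cle p q -> cle q r -> cle p r.
Proof. unfold cle; auto. Qed.

Lemma cond_amalgamate {W : Type} (p q : cond W) :
  (forall c b b', proj1_sig p c = Some b -> proj1_sig q c = Some b' -> b = b') ->
  exists s, cle s p /\ cle s q.
Proof.
  intro Hcomp.
  set (sf := fun c => match proj1_sig p c with
                      | Some b => Some b | None => proj1_sig q c end).
  assert (Hsf : finsupp sf).
  { destruct (proj2_sig p) as [lp Hlp], (proj2_sig q) as [lq Hlq].
    exists (lp ++ lq); intros c Hc; apply in_or_app; unfold sf in Hc.
    destruct (proj1_sig p c) eqn:E; [left; apply Hlp | right; apply Hlq];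
      congruence. }
  exists (exist _ sf Hsf); split; intros c b H; simpl; unfold sf.
  - now rewrite H.
  - destruct (proj1_sig p c) as [b'|] eqn:E; auto.
    now rewrite (Hcomp _ _ _ E H).
Qed.

Lemma dec_spec (P : Prop) : dec P = true <-> P.
Proof.
  unfold dec; destruct (excluded_middle_informative P); split;
    auto; easy.
Qed.

Section Action.

Variables (W : Type) (z : W) (rho : W -> W) (pi : list (gen W)).

Local Notation act := (act_cond z rho pi).

Lemma act_cond_involutive (p : cond W) : act (act p) = p.
Proof.
  apply cond_ext; intro c; unfold act_cond, act_fun; simpl.
  destruct (proj1_sig p c) as [b|]; simpl; auto.
  now destruct (flip_at z rho pi c), b.
Qed.

Lemma act_cle (p q : cond W) : cle q p -> cle (act q) (act p).
Proof.
  unfold cle; simpl; unfold act_fun; intros H c b.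
  destruct (proj1_sig p c) as [b'|] eqn:E; simpl; [|discriminate].
  now rewrite (H _ _ E).
Qed.

Lemma act_cle_iff (p q : cond W) : cle (act q) (act p) <-> cle q p.
Proof.
  split; [|apply act_cle].
  intro H; apply act_cle in H; now rewrite !act_cond_involutive in H.
Qed.

Lemma act_cone : act (cone W) = cone W.
Proof. now apply cond_ext. Qed.

Lemma dense_below_act (p : cond W) (D D' : cond W -> Prop) :
  dense_below p D -> (forall q, D q -> D' (act q)) -> dense_below (act p) D'.
Proof.
  intros Hp HD r Hr.
  rewrite <- (act_cond_involutive r), act_cle_iff in Hr.
  destruct (Hp _ Hr) as [q [Hq Dq]].
  exists (act q); split; auto.
  now rewrite <- (act_cond_involutive r), act_cle_iff.
Qed.

Lemma forces_eq_act (x y : name (cond W)) (p : cond W) :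
  forces_eq x y p -> forces_eq (act_name z rho pi x) (act_name z rho pi y) (act p).
Proof.
  revert y p; induction x as [Ix f IH c]; intros [J g d] p [H1 H2]; simpl; split.
  - intro i; apply (dense_below_act _ _ _ (H1 i)).
    intros q [Hqp Hq]; split; [now apply act_cle|].
    rewrite act_cle_iff; intro Hc; destruct (Hq Hc) as [j [Hj Hf]].
    exists j; split; [now apply act_cle | now apply IH].
  - intro j; apply (dense_below_act _ _ _ (H2 j)).
    intros q [Hqp Hq]; split; [now apply act_cle|].
    rewrite act_cle_iff; intro Hc; destruct (Hq Hc) as [i [Hi Hf]].
    exists i; split; [now apply act_cle | now apply IH].
Qed.

Lemma forces_in_act (a y : name (cond W)) (p : cond W) :
  forces_in a y p -> forces_in (act_name z rho pi a) (act_name z rho pi y) (act p).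
Proof.
  destruct y as [J g d]; simpl; intro H; apply (dense_below_act _ _ _ H).
  intros q [Hq [j [Hj Hf]]]; split; [now apply act_cle|].
  exists j; split; [now apply act_cle | now apply forces_eq_act].
Qed.

Lemma act_checkn (m : nat) :
  name_eq (act_name z rho pi (checkn (cone W) m)) (checkn (cone W) m).
Proof.
  induction m as [|m IH]; [split; intros []|].
  revert IH; cbn [checkn]; destruct (checkn (cone W) m) as [Ix f c]; intro IH.
  pose proof IH as [IH1 IH2]; split.
  - intros [i|].
    + destruct (IH1 i) as [j [Ej _]]; exists (Some j); split; [exact Ej | apply act_cone].
    + exists None; split; [exact IH | apply act_cone].
  - intros [j|].
    + destruct (IH2 j) as [i [Ei _]]; exists (Some i); split; [exact Ei | apply act_cone].
    + exists None; split; [exact IH | apply act_cone].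
Qed.

End Action.

Lemma forces_eq_name_eq {W : Type} (x x' y y' : name (cond W)) (p : cond W) :
  name_eq x x' -> name_eq y y' -> forces_eq x y p -> forces_eq x' y' p.
Proof.
  revert x' y y' p; induction x as [Ix f IH c].
  intros [Ix' f' c'] [J g d] [J' g' d'] p [Ex1 Ex2] [Ey1 Ey2] [H1 H2]; split.
  - intros i' r Hr; destruct (Ex2 i') as [i [Ei Eci]].
    destruct (H1 i r Hr) as [q [Hqr [Hqp Hq]]].
    exists q; repeat split; auto.
    rewrite <- Eci; intro Hc; destruct (Hq Hc) as [j [Hj Hf]].
    destruct (Ey1 j) as [j' [Ej Edj]].
    exists j'; split; [now rewrite <- Edj | eapply IH; eauto].
  - intros j' r Hr; destruct (Ey2 j') as [j [Ej Edj]].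
    destruct (H2 j r Hr) as [q [Hqr [Hqp Hq]]].
    exists q; repeat split; auto.
    rewrite <- Edj; intro Hc; destruct (Hq Hc) as [i [Hi Hf]].
    destruct (Ex1 i) as [i' [Ei Eci]].
    exists i'; split; [now rewrite <- Eci | eapply IH; eauto].
Qed.

Lemma forces_in_name_eq {W : Type} (a a' y y' : name (cond W)) (p : cond W) :
  name_eq a a' -> name_eq y y' -> forces_in a y p -> forces_in a' y' p.
Proof.
  destruct y as [J g d], y' as [J' g' d']; intros Ea [Ey1 _] H r Hr.
  destruct (H r Hr) as [q [Hqr [Hqp [j [Hj Hf]]]]].
  destruct (Ey1 j) as [j' [Ej Edj]].
  exists q; repeat split; auto; exists j'; split;
    [now rewrite <- Edj | eapply forces_eq_name_eq; eauto].
Qed.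

Lemma forces_in_cle {W : Type} (a y : name (cond W)) (p q : cond W) :
  forces_in a y p -> cle q p -> forces_in a y q.
Proof.
  destruct y as [J g d]; intros H Hq r Hr.
  destruct (H r (cle_trans _ _ _ Hr Hq)) as [s [Hsr [_ Hj]]].
  exists s; repeat split; auto; eapply cle_trans; eauto.
Qed.

Lemma forces_in_of_dense {W : Type} (a y : name (cond W)) (p : cond W) :
  (forall r, cle r p -> exists q, cle q r /\ forces_in a y q) -> forces_in a y p.
Proof.
  destruct y as [J g d]; intros H r Hr.
  destruct (H r Hr) as [q [Hqr Hq]].
  destruct (Hq q (cle_refl q)) as [s [Hsq [_ Hj]]].
  exists s; repeat split; auto; repeat (eapply cle_trans; eauto).
Qed.

Lemma checkn_supported {W : Type} (z : W) rho (A : W -> Prop) (m : nat) :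
  supported z rho A (checkn (cone W) m).
Proof. intros pi _ _; apply act_checkn. Qed.

Lemma forces_in_supported_act {W : Type} (z : W) rho (A : W -> Prop)
  (a x : name (cond W)) (pi : list (gen W)) (q : cond W) :
  supported z rho A a -> supported z rho A x -> valid_word pi -> inFix z rho A pi ->
  forces_in a x q -> forces_in a x (act_cond z rho pi q).
Proof.
  intros Ha Hx Hv Hf Hq.
  eapply forces_in_name_eq; [apply Ha | apply Hx | apply forces_in_act]; eauto.
Qed.

Lemma list_max_by {T W : Type} (lt : W -> W -> Prop)
  (Hirr : forall x, ~ lt x x) (Htr : forall x y w, lt x y -> lt y w -> lt x w)
  (Htot : forall x y, lt x y \/ x = y \/ lt y x) (f : T -> W) (L : list T) :
  L <> [] -> exists c, In c L /\ forall c', In c' L -> ~ lt (f c) (f c').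
Proof.
  induction L as [|a l IH]; [congruence|]; intros _.
  destruct l as [|b l].
  { exists a; split; [now left|]; intros c' [<-|[]]; apply Hirr. }
  destruct IH as [m [Hm Hmax]]; [congruence|].
  destruct (Htot (f a) (f m)) as [H|[H|H]].
  - exists m; split; [now right|]; intros c' [<-|Hc']; auto.
    intro H'; apply (Hirr (f a)); eauto.
  - exists a; split; [now left|]; intros c' [<-|Hc']; [apply Hirr|].
    rewrite H; auto.
  - exists a; split; [now left|]; intros c' [<-|Hc']; [apply Hirr|].
    intro H'; apply (Hmax c' Hc'); eauto.
Qed.

Definition point_gen {W : Type} (xi : W) (i n : nat) : gen W :=
  (xi, i, fun k => Nat.eqb k n).

Lemma point_gen_fin_or_cofin {W : Type} (xi : W) (i n : nat) :
  fin_or_cofin (snd (point_gen xi i n)).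
Proof. left; exists (S n); intros k Hk; apply Nat.eqb_neq; simpl; lia. Qed.

Lemma gen_hits_point_gen {W : Type} (z : W) rho (xi zeta : W) (i j n k : nat) :
  gen_hits z rho (point_gen xi i n) (zeta, j, k) = true <->
  i = j /\ k = n /\ (zeta = xi \/ zeta <> z /\ rho zeta = xi).
Proof.
  unfold gen_hits, point_gen.
  now rewrite !andb_true_iff, !Nat.eqb_eq, dec_spec, and_assoc.
Qed.

Section Homogeneity.

Variables (W : Type) (lt : W -> W -> Prop) (z : W) (rho : W -> W).
Hypotheses (Hirr : forall x, ~ lt x x)
           (Htr : forall x y w, lt x y -> lt y w -> lt x w)
           (Htot : forall x y, lt x y \/ x = y \/ lt y x)
           (Hrho : regressive lt z rho).
Variables (A : W -> Prop).
Hypothesis (HAcl : rho_closed z rho A).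

Lemma in_cl_rho_closed (zeta : W) : in_cl z rho A zeta -> A zeta.
Proof. intro H; apply H; auto. Qed.

Lemma inFix_point_gen (pi : list (gen W)) (xi : W) (i n : nat) :
  ~ A xi -> inFix z rho A pi -> inFix z rho A (point_gen xi i n :: pi).
Proof.
  intros HnA Hf zeta j k Hcl.
  change (xorb (gen_hits z rho (point_gen xi i n) (zeta, j, k))
               (flip_at z rho pi (zeta, j, k)) = false).
  rewrite (Hf _ _ _ Hcl); apply in_cl_rho_closed in Hcl.
  destruct (gen_hits _ _ _ _) eqn:E; auto.
  apply gen_hits_point_gen in E as (_ & _ & [<-|[Hz <-]]); exfalso; auto.
Qed.

Lemma realize_flips (t : coord W -> bool) (L : list (coord W)) :
  (forall xi i n, In (xi, i, n) L -> t (xi, i, n) = true -> ~ A xi) ->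
  exists pi, valid_word pi /\ inFix z rho A pi /\
    forall c, In c L -> flip_at z rho pi c = t c.
Proof.
  induction L as [L IH] using (induction_ltof1 _ (@length _)); intro Ht.
  destruct L as [|c0 L0].
  { exists []; repeat split; [constructor | easy]. }
  destruct (list_max_by lt Hirr Htr Htot (fun c => fst (fst c)) (c0 :: L0))
    as [[[xi i] n] [Hcs Hmax]]; [congruence|].
  set (L := c0 :: L0) in *.
  set (eq_coord := fun a b : coord W => excluded_middle_informative (a = b)).
  destruct (IH (remove eq_coord (xi, i, n) L)) as [pi [Hv [Hf Hpi]]].
  { apply remove_length_lt, Hcs. }
  { intros ? ? ? Hc; apply in_remove in Hc; apply Ht, Hc. }
  assert (Hrest : forall c, In c L -> c <> (xi, i, n) -> flip_at z rho pi c = t c).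
  { intros c Hc Hne; apply Hpi, in_in_remove; auto. }
  destruct (bool_dec (flip_at z rho pi (xi, i, n)) (t (xi, i, n))) as [Heq|Hne].
  { exists pi; repeat split; auto; intros c Hc.
    destruct (eq_coord c (xi, i, n)) as [->|]; auto. }
  assert (HnA : ~ A xi).
  { intro HA; apply Hne; rewrite Hf by (intros B HB _; now apply HB).
    destruct (t (xi, i, n)) eqn:Et; auto; exfalso; exact (Ht _ _ _ Hcs Et HA). }
  exists (point_gen xi i n :: pi); split; [|split].
  - constructor; [apply point_gen_fin_or_cofin | exact Hv].
  - now apply inFix_point_gen.
  - intros [[zeta j] k] Hc.
    change (xorb (gen_hits z rho (point_gen xi i n) (zeta, j, k))
                 (flip_at z rho pi (zeta, j, k)) = t (zeta, j, k)).
    destruct (eq_coord (zeta, j, k) (xi, i, n)) as [E|E].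
    + injection E as -> -> ->.
      assert (Hhit : gen_hits z rho (point_gen xi i n) (xi, i, n) = true)
        by (apply gen_hits_point_gen; auto).
      rewrite Hhit; destruct (flip_at _ _ _ _), (t _); simpl; congruence.
    + rewrite Hrest by assumption.
      destruct (gen_hits _ _ _ _) eqn:Hhit; auto.
      apply gen_hits_point_gen in Hhit as (-> & -> & [->|[Hz Hr]]); [easy|].
      exfalso; apply (Hmax _ Hc); simpl; rewrite <- Hr; now apply Hrho.
Qed.

Lemma restrict_homogeneous (p r : cond W) :
  cle r (restrict A p) ->
  exists pi, valid_word pi /\ inFix z rho A pi /\
    exists s, cle s p /\ cle s (act_cond z rho pi r).
Proof.
  intro Hr.
  set (t := fun c => match proj1_sig r c, proj1_sig p c with
                     | Some b, Some b' => xorb b b' | _, _ => false end).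
  destruct (proj2_sig r) as [lr Hlr].
  destruct (realize_flips t lr) as [pi [Hv [Hf Hpi]]].
  { intros xi i n _ Ht HA; unfold t in Ht.
    destruct (proj1_sig r (xi, i, n)) as [b|] eqn:Er; [|discriminate].
    destruct (proj1_sig p (xi, i, n)) as [b'|] eqn:Ep; [|discriminate].
    assert (Hres : proj1_sig (restrict A p) (xi, i, n) = Some b').
    { simpl; unfold restr_fun; now rewrite (proj2 (dec_spec _) HA). }
    apply Hr in Hres; rewrite Hres in Er; injection Er as ->.
    now destruct b. }
  exists pi; repeat split; auto.
  apply cond_amalgamate; intros c b' b Hp Hact; simpl in Hact; unfold act_fun in Hact.
  destruct (proj1_sig r c) as [b0|] eqn:Er; [|discriminate].
  injection Hact as <-; rewrite Hpi by (apply Hlr; congruence).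
  unfold t; rewrite Er, Hp; now destruct b0, b'.
Qed.

Variables (a x : name (cond W)).
Hypotheses (Ha : supported z rho A a) (Hx : supported z rho A x).

Lemma forces_in_restrict (p : cond W) :
  forces_in a x p -> forces_in a x (restrict A p).
Proof.
  intro Hp; apply forces_in_of_dense; intros r Hr.
  destruct (restrict_homogeneous p r Hr) as [pi [Hv [Hf [s [Hsp Hsr]]]]].
  exists (act_cond z rho pi s); split.
  - now rewrite <- (act_cond_involutive W z rho pi r), act_cle_iff.
  - eapply forces_in_supported_act; eauto; eapply forces_in_cle; eauto.
Qed.

Lemma forces_nin_restrict (p : cond W) :
  forces_nin a x p -> forces_nin a x (restrict A p).
Proof.
  intros Hp r Hr Hrin.
  destruct (restrict_homogeneous p r Hr) as [pi [Hv [Hf [s [Hsp Hsr]]]]].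
  apply (Hp s Hsp); eapply forces_in_cle; [|exact Hsr].
  eapply forces_in_supported_act; eauto.
Qed.

End Homogeneity.

Theorem lemma4p4 (W : Type) (lt : W -> W -> Prop) (z : W) (rho : W -> W)
  (HW : is_omega1 lt) (Hz : forall w, w = z \/ lt z w)
  (Hrho : regressive lt z rho)
  (x : name (cond W)) (Hx : hsym z rho x)
  (A : W -> Prop) (HAc : countable A) (HAcl : rho_closed z rho A)
  (Hsupp : supported z rho A x)
  (m : nat) (p : cond W)
  (Hdec : forces_in (checkn (cone W) m) x p \/ forces_nin (checkn (cone W) m) x p) :
  (forces_in (checkn (cone W) m) x p ->
     forces_in (checkn (cone W) m) x (restrict A p)) /\
  (forces_nin (checkn (cone W) m) x p ->
     forces_nin (checkn (cone W) m) x (restrict A p)).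
Proof.
  destruct HW as (Hirr & Htr & Htot & _).
  pose proof (checkn_supported z rho A m) as Hcheck.
  split.
  - exact (forces_in_restrict _ lt z rho Hirr Htr Htot Hrho A HAcl _ _ Hcheck Hsupp p).
  - exact (forces_nin_restrict _ lt z rho Hirr Htr Htot Hrho A HAcl _ _ Hcheck Hsupp p).
Qed.
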